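(* Let $X$ be a Tychonoff pseudocompact space and $Y$ any space. Then $\mathsf{EC_{cl}}(X,Y)\Leftrightarrow\mathsf{EC_{cpt}}(X,Y)$.
   Context: All spaces are Hausdorff and maps continuous. A space is pseudocompact if every continuous real-valued function on it is bounded. For a non-Lindelöf space $X$ and a space $Y$: $\mathsf{EC_{cl}}(X,Y)$ means that for every continuous $f:X\to Y$ there is a closed Lindelöf $Z\subset X$ with $f(X\setminus Z)$ a singleton; $\mathsf{EC_{cpt}}(X,Y)$ is the same with ''compact'' in place of ''closed Lindelöf''. *)

From HB Require Import structures.
From mathcomp Require Import all_boot all_order all_algebra.
From mathcomp Require Import all_classical all_reals all_analysis.
From mathcomp Require Import Rstruct Rstruct_topology.

Set Implicit Arguments. Unset Strict Implicit. Unset Printing Implicit Defensive.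
Import Order.TTheory GRing.Theory Num.Theory.
Local Open Scope classical_set_scope.
Local Open Scope ring_scope.

Definition lindelof {T : topologicalType} (A : set T) : Prop :=
  forall (I : Type) (U : I -> set T),
    (forall i, open (U i)) -> A `<=` \bigcup_(i in setT) U i ->
    exists J : set I, countable J /\ A `<=` \bigcup_(i in J) U i.

Definition tychonoff_space (T : topologicalType) : Prop :=
  hausdorff_space T /\
  forall (A : set T) (x : T), closed A -> ~ A x ->
    exists f : T -> Rdefinitions.R,
      continuous f /\ (forall y, 0 <= f y <= 1) /\ f x = 0 /\
      (forall a, A a -> f a = 1).

Definition pseudocompact (T : topologicalType) : Prop :=
  forall f : T -> Rdefinitions.R, continuous f ->
    exists M : Rdefinitions.R, forall x, `|f x| <= M.

Definition EC_cl (X Y : topologicalType) : Prop :=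
  forall f : X -> Y, continuous f ->
    exists Z : set X, closed Z /\ lindelof Z /\
      exists y : Y, f @` (~` Z) = [set y].

Definition EC_cpt (X Y : topologicalType) : Prop :=
  forall f : X -> Y, continuous f ->
    exists Z : set X, compact Z /\
      exists y : Y, f @` (~` Z) = [set y].

From HB Require Import structures.
From mathcomp Require Import all_boot all_order all_algebra.
From mathcomp Require Import all_classical all_reals all_analysis.
From mathcomp Require Import Rstruct Rstruct_topology finmap.
From mathcomp Require Import lra.

(* Let f be constant, equal to y, off a closed Lindelof set Z, and let K be the
   closure of the open set V = f^-1(Y \ {y}).  Then K lies in Z and f is y off
   K, so it suffices that K is compact.  K is Lindelof, so an open cover of K
   without finite subcover would, by regularity, yield open sets G_n covering K
   such that no finitely many closures cl G_n cover V.  The nonempty open sets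
   V \ (cl G_0 u ... u cl G_n) then form a locally finite sequence, and in a
   Tychonoff space the sum of n-fold Urysohn bumps inside them is an unbounded
   continuous function, contradicting pseudocompactness.  Conversely, compact
   sets of a Hausdorff space are closed and Lindelof. *)

Set Implicit Arguments. Unset Strict Implicit. Unset Printing Implicit Defensive.
Import Order.TTheory GRing.Theory Num.Theory.
Local Open Scope classical_set_scope.
Local Open Scope ring_scope.
Import numFieldNormedType.Exports.

(* The cover characterisation of compactness and the enumeration of countable
   sets are stated for pointed types; any point of the space will do. *)
Definition pointed_at {X : topologicalType} (x0 : X) : Type := X.
HB.instance Definition _ (X : topologicalType) (x0 : X) :=
  Topological.copy (pointed_at x0) X.
HB.instance Definition _ (X : topologicalType) (x0 : X) :=
  isPointed.Build (pointed_at x0) x0.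

Lemma compact_coverE (X : topologicalType) (x0 : X) : compact = @cover_compact X.
Proof. exact: (@compact_cover (pointed_at x0)). Qed.

Lemma compact_lindelof (X : topologicalType) (A : set X) :
  compact A -> lindelof A.
Proof.
move=> cA I U oU AU.
have [->|/set0P[x0 _]] := eqVneq A set0; first by exists set0; split.
rewrite (compact_coverE x0) in cA.
have [D' _ AD'] := cA {classic I} setT U (fun i _ => oU i) AU.
by exists [set` D']; split; [exact: finite_set_countable (finite_fset D') | exact: AD'].
Qed.

Lemma lindelof_closed_subset (X : topologicalType) (Z K : set X) :
  lindelof Z -> closed K -> K `<=` Z -> lindelof K.
Proof.
move=> lZ cK KZ I U oU KU.
pose U' (o : option I) := if o is Some i then U i else ~` K.
have oU' o : open (U' o) by case: o => [i|] //=; rewrite openC.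
have ZU' : Z `<=` \bigcup_(o in setT) U' o.
  move=> z _; have [Kz|nKz] := pselect (K z); last by exists None.
  by have [i _ Uiz] := KU z Kz; exists (Some i).
have [J [/countable_injP[e einj] ZJ]] := lZ _ U' oU' ZU'.
exists (Some @^-1` J); split.
  apply/countable_injP; exists (e \o Some) => i j /set_mem Ji /set_mem Jj /=.
  by move/einj => /(_ (mem_set Ji) (mem_set Jj)) [].
by move=> x /KZ /ZJ [[i|] Ji U'x] //; exists i.
Qed.

Lemma lindelof_seq_subcover (X : topologicalType) (I : pointedType) (A : set X)
    (U : I -> set X) :
  lindelof A -> (forall i, open (U i)) -> A `<=` \bigcup_(i in setT) U i ->
  exists s : nat -> I, A `<=` \bigcup_n U (s n).
Proof.
move=> lA oU AU; have [J [cJ AJ]] := lA _ U oU AU.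
have [s sJ] := pcard_surjP cJ.
exists s => x /AJ [i /sJ [n _ <-] Uix]; by exists n.
Qed.

Section tychonoff.
Variables (X : topologicalType) (tX : tychonoff_space X).

Lemma tychonoff_open_separator (U : set X) (x : X) : open U -> U x ->
  exists h : X -> Rdefinitions.R, [/\ continuous h, forall y, 0 <= h y <= 1,
    h x = 0 & forall y, ~ U y -> h y = 1].
Proof.
move=> oU Ux; have [h [hc [h01 [hx h1]]]] : exists h : X -> Rdefinitions.R,
    continuous h /\ (forall y, 0 <= h y <= 1) /\ h x = 0 /\
    (forall y, (~` U) y -> h y = 1).
  by apply: tX.2; [rewrite closedC | rewrite /= notK].
by exists h.
Qed.

Lemma tychonoff_regular (U : set X) (x : X) : open U -> U x ->
  exists2 G : set X, open G /\ G x & closure G `<=` U.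
Proof.
move=> oU Ux; have [h [hc _ hx h1]] := tychonoff_open_separator oU Ux.
exists (h @^-1` [set r | r < 1/2]).
  split; last by rewrite /= hx; lra.
  by apply: open_comp; [move=> y _; exact: hc | exact: open_lt].
have cl : closed (h @^-1` [set r | r <= 1/2]).
  by apply: preimage_closed; [move=> y _; exact: hc | exact: closed_le].
apply: (@subset_trans _ (h @^-1` [set r | r <= 1/2])).
  by rewrite [X in _ `<=` X](closure_id _).1 //; apply: closureS => z /ltW.
by move=> y /= hy; apply: contrapT => nUy; move: hy; rewrite h1 //; lra.
Qed.

End tychonoff.

Lemma locally_stationary_limit_continuous (X Y : topologicalType)
    (S : nat -> X -> Y) :
  (forall k, continuous (S k)) ->
  (forall x : X, exists2 N : set X, nbhs x N &
     exists m, forall k, (m <= k)%N -> forall w, N w -> S k w = S m w) ->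
  exists2 g : X -> Y, continuous g &
    forall x, exists m, forall k, (m <= k)%N -> g x = S k x.
Proof.
move=> Sc Sst; have /choice[Nm NmP] : forall x : X, exists p : set X * nat,
    nbhs x p.1 /\ forall k, (p.2 <= k)%N -> forall w, p.1 w -> S k w = S p.2 w.
  by move=> x; have [N Nx [m Nm]] := Sst x; exists (N, m).
pose m x := (Nm x).2.
have gS x y : (Nm x).1 y -> S (m y) y = S (m x) y.
  move=> Nxy; have Nyy := nbhs_singleton (NmP y).1.
  by rewrite -((NmP y).2 (maxn (m x) (m y))) ?leq_maxr // (NmP x).2 ?leq_maxl.
exists (fun x => S (m x) x).
  move=> x; have near_g : \forall y \near x, S (m x) y = S (m y) y.
    by apply: filterS (NmP x).1 => y /gS ->.
  exact: cvg_trans (near_eq_cvg near_g) (Sc (m x) x).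
move=> x; exists (m x) => k mk.
by rewrite ((NmP x).2 k mk) //; exact: nbhs_singleton (NmP x).1.
Qed.

Definition locally_finite_seq {X : topologicalType} (O : nat -> set X) :=
  forall x : X, exists2 N : set X, nbhs x N &
    exists m, forall n, (m <= n)%N -> N `&` O n = set0.

Lemma pseudocompact_not_locally_finite (X : topologicalType) (O : nat -> set X) :
  tychonoff_space X -> pseudocompact X ->
  (forall n, open (O n)) -> (forall n, O n !=set0) -> ~ locally_finite_seq O.
Proof.
move=> tX pcX oO /choice[xs Oxs] lfO.
have /choice[h hP] n : exists h : X -> Rdefinitions.R, [/\ continuous h,
    forall y, 0 <= h y <= 1, h (xs n) = 0 & forall y, ~ O n y -> h y = 1].
  exact: tychonoff_open_separator.
pose t n x := n%:R * (1 - h n x).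
have t_ge0 n x : 0 <= t n x.
  have [_ h01 _ _] := hP n; have /andP[_ hle1] := h01 x.
  by rewrite mulr_ge0 ?subr_ge0.
have t_cont n : continuous (t n).
  have [hc _ _ _] := hP n; move=> x.
  by apply: cvgM; [exact: cvg_cst | apply: cvgB; [exact: cvg_cst | exact: hc]].
have t_out n x : ~ O n x -> t n x = 0.
  by have [_ _ _ h1] := hP n; move=> /h1; rewrite /t => ->; rewrite subrr mulr0.
have t_xs n : t n (xs n) = n%:R.
  by have [_ _ h0 _] := hP n; rewrite /t h0 subr0 mulr1.
pose S k x := \sum_(0 <= i < k) t i x.
have S_cont k : continuous (S k).
  elim: k => [|k IHk] x; rewrite /S.
    under [fun y => _]funext => y do rewrite big_geq //.
    exact: cvg_cst.
  under [fun y => _]funext => y do rewrite big_nat_recr //=.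
  exact: (@cvgD _ Rdefinitions.R^o) (IHk x) (t_cont k x).
have S_ge k n x : (n < k)%N -> t n x <= S k x.
  move=> nk; rewrite /S (big_cat_nat (leq0n n) (ltnW nk)) (big_ltn nk) /=.
  have S1 : 0 <= \sum_(0 <= i < n) t i x by apply: sumr_ge0.
  have S2 : 0 <= \sum_(n.+1 <= i < k) t i x by apply: sumr_ge0.
  lra.
have [x|g gc gS] := @locally_stationary_limit_continuous X Rdefinitions.R S S_cont.
  have [N Nx [m Nm]] := lfO x; exists N => //; exists m => k mk w Nw.
  rewrite /S (big_cat_nat (leq0n m) mk) /= [X in _ + X]big1_seq ?addr0 //.
  move=> i /andP[_]; rewrite mem_index_iota => /andP[mi _]; apply: t_out => Oiw.
  by have : (N `&` O i) w := conj Nw Oiw; rewrite Nm.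
have [M gM] := pcX g gc.
have M_ge0 : 0 <= M := le_trans (normr_ge0 _) (gM (xs 0%N)).
pose n := Num.bound M; have Mn : M < n%:R := archi_boundP M_ge0.
have [m gm] := gS (xs n).
have := S_ge (maxn m n.+1) n (xs n) (leq_maxr _ _).
rewrite -gm ?leq_maxl // t_xs => ngx.
have := le_trans (ler_norm _) (gM (xs n)); lra.
Qed.

Lemma pseudocompact_closure_seq_cover (X : topologicalType) (V : set X)
    (G : nat -> set X) :
  tychonoff_space X -> pseudocompact X -> open V -> (forall n, open (G n)) ->
  closure V `<=` \bigcup_n G n ->
  exists n, closure V `<=` \bigcup_(k in `I_n) closure (G k).
Proof.
move=> tX pcX oV oG VG; apply: contrapT => /forallNP nVC.
pose C n := \bigcup_(k in `I_n) closure (G k).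
have C_closed n : closed (C n).
  by apply: closed_bigcup => [|k _]; [exact: finite_II | exact: closed_closure].
apply: (@pseudocompact_not_locally_finite X (fun n => V `\` C n) tX pcX).
- by move=> n; apply: openI => //; rewrite openC.
- move=> n; apply: contrapT => /forallNP VC; apply: (nVC n).
  rewrite [X in _ `<=` X](closure_id (C n)).1 //; apply: closureS => x Vx.
  by apply: contrapT => nCx; apply: (VC x).
move=> x; have [Vx|nVx] := pselect (closure V x).
  have [k _ Gkx] := VG x Vx; exists (G k); first exact: open_nbhs_nbhs.
  exists k.+1 => n kn; apply/seteqP; split => // w [Gkw [_]]; apply.
  by exists k; [exact: leq_trans kn | exact: subset_closure].
exists (~` closure V).
  by apply: open_nbhs_nbhs; split => //; rewrite openC; exact: closed_closure.
exists 0%N => n _; apply/seteqP; split => // w [nVw [Vw _]].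
by apply: nVw; exact: subset_closure.
Qed.

Lemma lindelof_closure_open_compact (X : topologicalType) (V Z : set X) :
  tychonoff_space X -> pseudocompact X -> open V -> lindelof Z ->
  closure V `<=` Z -> compact (closure V).
Proof.
move=> tX pcX oV lZ VZ; set K := closure V.
have [->|/set0P[x0 Kx0]] := eqVneq K set0; first exact: compact0.
rewrite (compact_coverE x0) => I D f fo Kf.
have lK : lindelof K := lindelof_closed_subset lZ (@closed_closure _ V) VZ.
have [i0 Di0 _] := Kf x0 Kx0.
have /choice[iG iGP] : forall x, exists p : I * set X,
    [/\ D p.1, open p.2, closure p.2 `<=` f p.1 & K x -> p.2 x].
  move=> x; have [Kx|nKx] := pselect (K x); last first.
    by exists (i0, set0); split => //; [exact: open0 | rewrite closure0].
  have [i Di fi] := Kf x Kx.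
  have [G [oG Gx] Gf] := tychonoff_regular tX (fo i Di) fi.
  by exists (i, G).
pose idx x := (iG x).1; pose G (x : pointed_at x0) := (iG x).2.
have [D_idx oG G_f K_G] : [/\ forall x, D (idx x), forall x, open (G x),
    forall x, closure (G x) `<=` f (idx x) & forall x, K x -> G x x].
  by split=> x; case: (iGP x).
have [s Ks] : exists s : nat -> pointed_at x0, K `<=` \bigcup_n G (s n).
  by apply: lindelof_seq_subcover lK oG _ => x Kx; exists x => //; apply: K_G.
have [n Kn] := pseudocompact_closure_seq_cover tX pcX oV (fun k => oG (s k)) Ks.
exists [fset idx (s k) | k in iota 0 n]%fset.
  by move=> i /imfsetP[k _ ->]; apply/mem_set.
move=> x /Kn [k kn Gkx]; exists (idx (s k)); last exact: G_f.
by apply/imfsetP; exists k => //; rewrite mem_iota.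
Qed.

Lemma EC_cl_cpt (X Y : topologicalType) :
  tychonoff_space X -> pseudocompact X -> accessible_space Y ->
  EC_cl X Y -> EC_cpt X Y.
Proof.
move=> tX pcX aY ecl f fc; have [Z [cZ [lZ [y fZ]]]] := ecl f fc.
pose V := f @^-1` (~` [set y]).
have oV : open V.
  apply: open_comp => [x _|]; first exact: fc.
  by rewrite openC; exact: accessible_closed_set1.
have VZ : closure V `<=` Z.
  rewrite [X in _ `<=` X](closure_id _).1 //; apply: closureS => x Vx.
  by apply: contrapT => nZx; apply: Vx; rewrite -fZ; exists x.
exists (closure V); split; first exact: lindelof_closure_open_compact oV lZ VZ.
exists y; apply/seteqP; split.
  by move=> _ [x nKx <-]; apply: contrapT => fxy; exact: nKx (subset_closure fxy).
move=> _ ->; have [x nZx fxy] : (f @` ~` Z) y by rewrite fZ.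
by exists x => // Kx; exact: nZx (VZ x Kx).
Qed.

Lemma EC_cpt_cl (X Y : topologicalType) :
  hausdorff_space X -> EC_cpt X Y -> EC_cl X Y.
Proof.
move=> hX ecpt f fc; have [Z [cZ fZ]] := ecpt f fc.
by exists Z; split; [exact: compact_closed | split; [exact: compact_lindelof|]].
Qed.

Unset Implicit Arguments.

Theorem theorem9p5 (X Y : topologicalType) :
  tychonoff_space X -> pseudocompact X -> ~ lindelof [set: X] ->
  hausdorff_space Y ->
  (EC_cl X Y <-> EC_cpt X Y).
Proof.
(* The non-Lindelof hypothesis only makes EC_cl meaningful. *)
move=> tX pcX _ hY; split; first exact: EC_cl_cpt (hausdorff_accessible hY).
exact: EC_cpt_cl tX.1.
Qed.
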